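(* Let $\mathcal{G}^s$ be an SCG and let $\pi^f$ be a directed graph on $\mathcal{V}^f$ such that $\pi^f$ is acyclic, every edge $A_s\to B_{s'}$ of $\pi^f$ satisfies $s\le s'$, and the reduction of $\pi^f$ is a subgraph of $\mathcal{G}^s$. Then there exists an FTCG $\mathcal{G}^f\in\mathcal{C}(\mathcal{G}^s)$ which contains $\pi^f$ (as a subgraph).
   Context: Let $\mathcal{V}$ be a finite set of time series, $\mathcal{V}^f=\{X_s: X\in\mathcal{V},s\in\mathbb{Z}\}$. An FTCG is a DAG on $\mathcal{V}^f$ whose edges $X_s\to Z_{s'}$ satisfy $s\le s'$. The reduction of a directed graph $\mathcal{H}$ on $\mathcal{V}^f$ is the directed graph on $\mathcal{V}$ with an edge $X\to Z$ iff $\mathcal{H}$ has an edge $X_{s-\gamma}\to Z_s$ for some $s$ and $\gamma\ge0$. The SCG reduced from an FTCG is its reduction; an SCG is a graph reduced from some FTCG, and $\mathcal{C}(\mathcal{G}^s)$ is the class of FTCGs whose reduction equals $\mathcal{G}^s$. *)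

From Stdlib Require Import ZArith List Relations.
Open Scope Z_scope.

Definition vf (V : Type) : Type := (V * Z)%type.

Definition fgraph (V : Type) := vf V -> vf V -> Prop.
Definition sgraph (V : Type) := V -> V -> Prop.

Definition finite_type (V : Type) : Prop := exists l : list V, forall x : V, In x l.

Definition acyclic {V : Type} (H : fgraph V) : Prop :=
  forall x : vf V, ~ clos_trans (vf V) H x x.

Definition time_respecting {V : Type} (H : fgraph V) : Prop :=
  forall (X Y : V) (s s' : Z), H (X, s) (Y, s') -> s <= s'.

Definition is_FTCG {V : Type} (H : fgraph V) : Prop :=
  acyclic H /\ time_respecting H.

Definition reduction {V : Type} (H : fgraph V) : sgraph V :=
  fun X Y => exists (s gamma : Z), 0 <= gamma /\ H (X, s - gamma) (Y, s).

Definition sgraph_eq {V : Type} (G1 G2 : sgraph V) : Prop :=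
  forall X Y, G1 X Y <-> G2 X Y.

Definition sgraph_sub {V : Type} (G1 G2 : sgraph V) : Prop :=
  forall X Y, G1 X Y -> G2 X Y.

Definition fgraph_sub {V : Type} (H1 H2 : fgraph V) : Prop :=
  forall a b, H1 a b -> H2 a b.

Definition is_SCG {V : Type} (Gs : sgraph V) : Prop :=
  exists Gf : fgraph V, is_FTCG Gf /\ sgraph_eq (reduction Gf) Gs.

Definition in_class {V : Type} (Gs : sgraph V) (Gf : fgraph V) : Prop :=
  is_FTCG Gf /\ sgraph_eq (reduction Gf) Gs.

(* Add to pif every lag-one edge X_s -> Y_(s+1) with X -> Y in Gs.  These edges
   realise every edge of Gs in the reduction, and since they strictly increase
   time, any cycle in the enlarged graph would stay at a single time instant and
   hence be a cycle of pif. *)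
From Stdlib Require Import ZArith List Relations Lia.

Section TimeRespectingUnion.

Variable V : Type.
Implicit Types (P Q : fgraph V) (Gs : sgraph V).

Definition time_increasing Q : Prop := forall a b, Q a b -> snd a < snd b.

Definition lag_one_edges Gs : fgraph V :=
  fun a b => Gs (fst a) (fst b) /\ snd b = snd a + 1.

Lemma lag_one_edges_time_increasing Gs : time_increasing (lag_one_edges Gs).
Proof. intros a b [_ Hab]; lia. Qed.

Lemma time_respecting_union P Q :
  time_respecting P -> time_increasing Q -> time_respecting (union _ P Q).
Proof.
  intros HP HQ X Y s s' [H | H].
  - exact (HP _ _ _ _ H).
  - apply Z.lt_le_incl, (HQ _ _ H).
Qed.

Lemma clos_trans_union_same_time P Q a b :
  time_respecting P -> time_increasing Q ->
  clos_trans _ (union _ P Q) a b ->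
  snd a <= snd b /\ (snd a = snd b -> clos_trans _ P a b).
Proof.
  intros HP HQ Hab.
  induction Hab as [[X s] [Y s'] [H | H] | a b c _ [Hab Pab] _ [Hbc Pbc]].
  - split; [exact (HP _ _ _ _ H) | now constructor].
  - specialize (HQ _ _ H); split; [lia | intros E; simpl in *; lia].
  - split; [lia | intros E].
    apply t_trans with b; [apply Pab | apply Pbc]; lia.
Qed.

Lemma acyclic_union P Q :
  acyclic P -> time_respecting P -> time_increasing Q -> acyclic (union _ P Q).
Proof.
  intros Hac HP HQ x Hx.
  destruct (clos_trans_union_same_time P Q x x HP HQ Hx) as [_ Hxx].
  exact (Hac x (Hxx eq_refl)).
Qed.

Lemma reduction_union_lag_one P Gs :
  sgraph_sub (reduction P) Gs ->
  sgraph_eq (reduction (union _ P (lag_one_edges Gs))) Gs.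
Proof.
  intros Hsub X Y; split.
  - intros (s & g & Hg & [H | [H _]]).
    + apply Hsub; exists s, g; auto.
    + exact H.
  - intros H; exists 1, 1; split; [lia | right; split; [exact H | simpl; lia]].
Qed.

End TimeRespectingUnion.

Theorem lemma5 (V : Type) (HV : finite_type V) (Gs : sgraph V) (pif : fgraph V) :
  is_SCG Gs ->
  acyclic pif ->
  time_respecting pif ->
  sgraph_sub (reduction pif) Gs ->
  exists Gf : fgraph V, in_class Gs Gf /\ fgraph_sub pif Gf.
Proof.
  intros _ Hac Ht Hsub.
  pose proof (lag_one_edges_time_increasing V Gs) as Hinc.
  exists (union _ pif (lag_one_edges V Gs)); split.
  - split; [split |].
    + exact (acyclic_union V pif _ Hac Ht Hinc).
    + exact (time_respecting_union V pif _ Ht Hinc).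
    + exact (reduction_union_lag_one V pif Gs Hsub).
  - intros a b H; now left.
Qed.
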